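(* Let $G$ be a finite group. Then every subsemigroup of $\mathbb{N}\times G$ is finitely generated; consequently $\mathbb{N}\times G$ has only countably many subsemigroups.
   Context: $\mathbb{N}=\{1,2,3,\dots\}$ is the free monogenic semigroup (positive integers under addition); $\mathbb{N}\times G$ is the direct product with componentwise operation. *)

From mathcomp Require Import all_boot all_fingroup.
Set Implicit Arguments. Unset Strict Implicit. Unset Printing Implicit Defensive.

(* Elements of N x G are represented as pairs (n, g) : nat * gT with 0 < n
   (N = {1,2,3,...}).  The operation is componentwise: (m,g)(n,h) = (m+n, gh). *)
Definition NGmul (gT : finGroupType) (x y : nat * gT) : nat * gT :=
  (x.1 + y.1, (x.2 * y.2)%g).

Definition is_subsemigroup (gT : finGroupType) (S : nat * gT -> Prop) : Prop :=
  (forall x, S x -> 0 < x.1) /\ (forall x y, S x -> S y -> S (NGmul x y)).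

Inductive generated (gT : finGroupType) (F : seq (nat * gT)) : nat * gT -> Prop :=
  | gen_base x : x \in F -> generated F x
  | gen_mul x y : generated F x -> generated F y -> generated F (NGmul x y).

Definition finitely_generated (gT : finGroupType) (S : nat * gT -> Prop) : Prop :=
  exists F : seq (nat * gT),
    (forall x, x \in F -> S x) /\ (forall x, S x <-> generated F x).

Definition countably_many_subsemigroups (gT : finGroupType) : Prop :=
  exists e : nat -> (nat * gT -> Prop),
    forall S, is_subsemigroup S -> exists n, forall x, S x <-> e n x.

(* If (n, g) lies in S then so does (p, 1) with p = #[g] n, hence S is stable
   under a -> a + p in the first coordinate.  In each of the finitely many
   classes (a mod p, g) that meet S, everything above the least member of the
   class lies in S, so beyond some bound B every (a, g) in S factors as
   (a - p, g) (p, 1).  The elements of S below B therefore generate S, and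
   finite lists of pairs are countable. *)

From Stdlib Require Import ClassicalEpsilon.
From mathcomp Require Import all_boot all_fingroup zify.

Set Implicit Arguments.
Unset Strict Implicit.
Unset Printing Implicit Defensive.

Definition classicb (P : Prop) : bool :=
  if excluded_middle_informative P then true else false.

Lemma classicbP (P : Prop) : reflect P (classicb P).
Proof. by rewrite /classicb; case: excluded_middle_informative => H; constructor. Qed.

Lemma eventually_all_seq (X : eqType) (P : nat -> X -> Prop) (s : seq X) :
  (forall b b' x, b <= b' -> P b x -> P b' x) ->
  (forall x, x \in s -> exists b, P b x) ->
  exists b, forall x, x \in s -> P b x.
Proof.
move=> P_mono; elim: s => [|y s IHs] evP; first by exists 0.
have [b1 Pb1y] := evP y (mem_head _ _).
have [b2 Pb2s] : exists b, forall x, x \in s -> P b x.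
  by apply: IHs => x sx; apply: evP; rewrite in_cons sx orbT.
exists (maxn b1 b2) => x; rewrite in_cons => /predU1P[->|sx].
  exact: P_mono (leq_maxl _ _) Pb1y.
exact: P_mono (leq_maxr _ _) (Pb2s x sx).
Qed.

Section Subsemigroup.

Variables (gT : finGroupType) (S : nat * gT -> Prop).
Hypothesis S_subsemigroup : is_subsemigroup S.

Let S_pos : forall x, S x -> 0 < x.1. Proof. by case: S_subsemigroup. Qed.
Let S_mul : forall x y, S x -> S y -> S (NGmul x y).
Proof. by case: S_subsemigroup. Qed.

Lemma generated_sub (F : seq (nat * gT)) :
  (forall x : nat * gT, x \in F -> S x) -> forall x, generated F x -> S x.
Proof. by move=> FS x; elim=> [y /FS //|y z _ Sy _ Sz]; exact: S_mul. Qed.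

Lemma subsemigroup_exp n g k : S (n, g) -> S (k.+1 * n, (g ^+ k.+1)%g).
Proof.
move=> Sng; elim: k => [|k IHk]; first by rewrite mul1n expg1.
by have := S_mul IHk Sng; rewrite /NGmul /= -expgSr mulSn addnC.
Qed.

Lemma subsemigroup_period n g : S (n, g) -> S (#[g]%g * n, 1%g).
Proof.
move=> Sng; have := subsemigroup_exp (#[g]%g).-1 Sng.
by rewrite prednK ?order_gt0 // expg_order.
Qed.

Lemma subsemigroup_shift p a g j : S (p, 1%g) -> S (a, g) -> S (a + j * p, g).
Proof.
move=> Sp Sag; elim: j => [|j IHj]; first by rewrite addn0.
by have := S_mul IHj Sp; rewrite /NGmul /= mulg1 mulSn addnCA addnC.
Qed.

Lemma subsemigroup_descent p :
  0 < p -> S (p, 1%g) ->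
  exists B, forall a g, S (a, g) -> B <= a -> S (a - p, g).
Proof.
move=> p_gt0 Sp.
pose descends b (c : nat * gT) :=
  forall a, S (a, c.2) -> a %% p = c.1 -> b <= a -> S (a - p, c.2).
have class_bound c : exists b, descends b c.
  have [[a0 [Sa0 a0_c]]|no_a0] := classic (exists a0, S (a0, c.2) /\ a0 %% p = c.1);
    last by exists 0 => a Sa a_c; case: no_a0; exists a.
  exists a0.+1 => a Sa a_c a0_lt_a.
  have /dvdnP[[|i] a_a0] : p %| a - a0 by rewrite -eqn_mod_dvd ?a_c ?a0_c // ltnW.
    by move: a_a0; lia.
  have -> : a - p = a0 + i * p by move: a_a0; rewrite mulSn; lia.
  exact: subsemigroup_shift.
have [B descB] := @eventually_all_seq _ descends
  [seq (r, g) | r <- iota 0 p, g <- enum gT]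
  (fun b b' c le_bb' Pb a Sa a_c le_b'a => Pb a Sa a_c (leq_trans le_bb' le_b'a))
  (fun c _ => class_bound c).
exists B => a g Sa le_Ba; apply: (descB (a %% p, g)) Sa erefl le_Ba.
by apply: allpairs_f; rewrite ?mem_enum // mem_iota add0n ltn_mod.
Qed.

Lemma subsemigroup_generated_below B :
  (forall x, S x -> B <= x.1 -> exists y z, [/\ S y, S z & x = NGmul y z]) ->
  finitely_generated S.
Proof.
move=> decomp.
set F := [seq x <- [seq (n, g) | n <- iota 0 B, g <- enum gT] | classicb (S x)].
have FS x : x \in F -> S x by rewrite mem_filter => /andP[/classicbP].
exists F; split=> // x; split; last exact: generated_sub.
elim: {x}x.1.+1 {-2}x (ltnSn x.1) => // m IHm [n g] /= n_lt_m Sx.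
have [n_lt_B|le_Bn] := ltnP n B.
  apply: gen_base; rewrite mem_filter; apply/andP; split; first exact/classicbP.
  by apply: allpairs_f; rewrite ?mem_enum // mem_iota.
have [y [z [Sy Sz xE]]] := decomp _ Sx le_Bn.
have [y_pos z_pos] := (S_pos Sy, S_pos Sz).
have n_eq : n = y.1 + z.1 by case: xE.
by rewrite xE; apply: gen_mul; apply: IHm => //; lia.
Qed.

Lemma subsemigroup_finitely_generated : finitely_generated S.
Proof.
have [[[n0 g0] Sx0]|S_empty] := classic (exists x, S x); last first.
  by apply: (@subsemigroup_generated_below 0) => x Sx; case: S_empty; exists x.
have Sp := subsemigroup_period Sx0.
have [B descB] := subsemigroup_descent (S_pos Sp) Sp.
apply: (@subsemigroup_generated_below B) => -[a g] Sag /= le_Ba.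
have Sag' := descB _ _ Sag le_Ba; have /= a_gt_p := S_pos Sag'.
exists (a - #[g0]%g * n0, g), (#[g0]%g * n0, 1%g); split => //.
by rewrite /NGmul /= mulg1 subnK // ltnW // -subn_gt0.
Qed.

End Subsemigroup.

Theorem lemma3p1 (gT : finGroupType) :
  (forall S : nat * gT -> Prop, is_subsemigroup S -> finitely_generated S) /\
  countably_many_subsemigroups gT.
Proof.
split=> [S|]; first exact: subsemigroup_finitely_generated.
exists (fun n x => if unpickle n is Some F then generated F x else False).
move=> S /subsemigroup_finitely_generated[F [_ SF]].
by exists (pickle F); rewrite pickleK.
Qed.
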